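(* Let $G=(V,E)$ be a finite graph of maximum degree $\Delta$ with no isolated vertices and adjacency matrix $A$. Let $b\in\{0\}\cup[1,\infty)$, $c(0)=0.109597$, $c(b)=0.0896883/b$ for $b\ge1$, and $0<\lambda<c(b)/\Delta$. Define, for $u\in V$, $D_u=d_u(1+\lambda)^b\log(1+\lambda)$, $\beta_u=\frac{1+\lambda}{\lambda}\frac{D_u}{W(D_u)(1+W(D_u))}$, $\gamma_u=\frac{1+\lambda}{\lambda}\frac{D_u}{d_u(1+W(D_u))}$, and $B=\mathrm{diag}(\boldsymbol\beta)$, $\Gamma=\mathrm{diag}(\boldsymbol\gamma)$. Then every $\mathbf x\in\mathbb R^V$ with $\mathbf x\ge\mathbf 0$ and $(B+\Gamma A)\mathbf x\ge\mathbf 1$ satisfies \[ \sum_{u\in V}x_u\ \ge\ \sum_{u\in V}\frac{1}{\beta_u+d_u\gamma_u}. \]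
   Context: $d_u$ denotes the degree of $u$; $W:(0,\infty)\to(0,\infty)$ is the principal branch of the Lambert $W$-function (inverse of $x\mapsto xe^x$). Vector inequalities are entrywise. *)

From HB Require Import structures.
From mathcomp Require Import all_boot all_order all_algebra.
From mathcomp Require Import all_classical all_reals.
From mathcomp Require Import all_analysis.
Set Implicit Arguments. Unset Strict Implicit. Unset Printing Implicit Defensive.
Import Order.TTheory GRing.Theory Num.Theory.
Local Open Scope classical_set_scope.
Local Open Scope ring_scope.

Definition LambertW {R : realType} (x : R) : R :=
  xget 0 [set w : R | 0 < w /\ w * expR w = x].

Definition simple_graph (n : nat) (e : rel 'I_n) : Prop :=
  (forall u v, e u v = e v u) /\ (forall u, ~~ e u u).

Definition deg (n : nat) (e : rel 'I_n) (u : 'I_n) : nat := #|[set v | e u v]|.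

Definition maxdeg (n : nat) (e : rel 'I_n) : nat := \max_(u < n) deg e u.

Definition adjmx {R : realType} (n : nat) (e : rel 'I_n) : 'M[R]_n :=
  \matrix_(i, j) (e i j)%:R.

Definition cconst {R : realType} (b : R) : R :=
  if b == 0 then 109597%:R / 1000000%:R else 896883%:R / (10000000%:R * b).

Definition Dv {R : realType} n (e : rel 'I_n) (b lam : R) (u : 'I_n) : R :=
  (deg e u)%:R * (1 + lam) `^ b * ln (1 + lam).

Definition betav {R : realType} n (e : rel 'I_n) (b lam : R) (u : 'I_n) : R :=
  (1 + lam) / lam * (Dv e b lam u /
     (LambertW (Dv e b lam u) * (1 + LambertW (Dv e b lam u)))).

Definition gammav {R : realType} n (e : rel 'I_n) (b lam : R) (u : 'I_n) : R :=
  (1 + lam) / lam * (Dv e b lam u /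
     ((deg e u)%:R * (1 + LambertW (Dv e b lam u)))).

From HB Require Import structures.
From mathcomp Require Import all_boot all_order all_algebra.
From mathcomp Require Import all_classical all_reals.
From mathcomp Require Import all_analysis.
From mathcomp Require Import ring lra.
Set Implicit Arguments. Unset Strict Implicit. Unset Printing Implicit Defensive.
Import Order.TTheory GRing.Theory Num.Theory numFieldNormedType.Exports.
Local Open Scope ring_scope.

(* Put a = (1 + lam)^b ln(1 + lam), K = a (1 + lam)/lam and p_u = W(D_u)/d_u = a e^(-W(D_u)).
   Then 1/(beta_u + d_u gamma_u) = p_u/K, and after rescaling x by K the constraints read
   x/p + A x >= 1 + d p, so the theorem is a lower bound for a linear program, proved with a dual
   solution. As 1/p_u >= d_u + 3 Delta, the matrix diag(1/p) + A is positive definite, so the dual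
   system m/p + A m = 1 is solvable, and a maximum-principle argument shows m > 0; weak duality
   then gives sum x >= sum m (1 + d p). Writing m = h + nu with h = p/(1 + d p), the excess
   sum m (1 + d p) - sum p is sum p L h + sum nu L p, L the graph Laplacian. Along every edge uv
   the difference h_u - h_v lies between p_u - p_v and twice it; this gives an edgewise inequality
   whose sum, together with the positive definiteness, shows that the excess is nonnegative. The
   margin 1/p_u >= d_u + 3 Delta and the comparison of h with p both follow from a Delta <= 1/4,
   which is where the bound on lam enters. *)

Section EdgeSums.
Variables (R : realFieldType) (n : nat) (e : rel 'I_n).
Hypothesis e_sym : forall u v, e u v = e v u.

Local Notation d u := ((deg e u)%:R : R).

Definition adj (f : 'I_n -> R) u : R := \sum_v (e u v)%:R * f v.
Definition lap (f : 'I_n -> R) u : R := d u * f u - adj f u.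
Definition esum (F : 'I_n -> 'I_n -> R) : R := \sum_u \sum_v (e u v)%:R * F u v.

Lemma deg_sum u : d u = \sum_v (e u v)%:R.
Proof.
rewrite /deg -sum1_card big_mkcond natr_sum /=.
by apply: eq_bigr => v _; rewrite /in_set unfold_in /= asboolb.
Qed.

Lemma eq_esum F G : (forall u v, F u v = G u v) -> esum F = esum G.
Proof. by move=> FG; apply: eq_bigr => u _; apply: eq_bigr => v _; rewrite FG. Qed.

Lemma ler_esum F G : (forall u v, F u v <= G u v) -> esum F <= esum G.
Proof.
by move=> FG; apply: ler_sum => u _; apply: ler_sum => v _; rewrite ler_wpM2l ?ler0n.
Qed.

Lemma esum_ge0 F : (forall u v, 0 <= F u v) -> 0 <= esum F.
Proof. by move=> F0; apply: sumr_ge0 => u _; apply: sumr_ge0 => v _; rewrite mulr_ge0 ?ler0n. Qed.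

Lemma esumD F G : esum (fun u v => F u v + G u v) = esum F + esum G.
Proof.
rewrite -big_split; apply: eq_bigr => u _.
by rewrite -big_split; apply: eq_bigr => v _; rewrite mulrDr.
Qed.

Lemma esumZ c F : esum (fun u v => c * F u v) = c * esum F.
Proof.
rewrite /esum mulr_sumr; apply: eq_bigr => u _.
by rewrite mulr_sumr; apply: eq_bigr => v _; ring.
Qed.

Lemma esum_swap F : esum F = esum (fun u v => F v u).
Proof.
by rewrite /esum exchange_big; apply: eq_bigr => u _; apply: eq_bigr => v _; rewrite e_sym.
Qed.

Lemma esum_symmetrize F : esum (fun u v => F u v + F v u) = 2 * esum F.
Proof. by rewrite esumD -esum_swap mulr2n mulrDl mul1r. Qed.

Lemma esum_row (f : 'I_n -> R) (G : 'I_n -> 'I_n -> R) :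
  esum (fun u v => f u * G u v) = \sum_u f u * \sum_v (e u v)%:R * G u v.
Proof. by apply: eq_bigr => u _; rewrite mulr_sumr; apply: eq_bigr => v _; ring. Qed.

Lemma sum_mul_adjC f g : \sum_u f u * adj g u = \sum_u g u * adj f u.
Proof. by rewrite -!esum_row esum_swap; apply: eq_esum => u v; rewrite mulrC. Qed.

Lemma esum_sub_mul f g :
  esum (fun u v => (f u - f v) * (g u - g v)) = 2 * \sum_u f u * lap g u.
Proof.
rewrite (eq_esum (G := fun u v => f u * (g u - g v) + f v * (g v - g u)));
  last by move=> u v; ring.
rewrite esum_symmetrize esum_row; congr (_ * _); apply: eq_bigr => u _; congr (_ * _).
by rewrite /lap /adj deg_sum mulr_suml -sumrB; apply: eq_bigr => v _; ring.
Qed.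

Lemma sum_mul_deg_adj_ge0 f : 0 <= \sum_u f u * (d u * f u + adj f u).
Proof.
have sq_ge0 : 0 <= esum (fun u v => (f u + f v) ^+ 2) by apply: esum_ge0 => u v; apply: sqr_ge0.
rewrite (eq_esum (G := fun u v => f u * (f u + f v) + f v * (f v + f u))) in sq_ge0;
  last by move=> u v; ring.
rewrite esum_symmetrize esum_row pmulr_rge0 // in sq_ge0.
congr (0 <= _): sq_ge0; apply: eq_bigr => u _; congr (_ * _).
by rewrite /adj deg_sum mulr_suml -big_split /=; apply: eq_bigr => v _; ring.
Qed.

Lemma sum_mul_lap_le f : \sum_u f u * lap f u <= 2 * \sum_u d u * f u ^+ 2.
Proof.
have -> : \sum_u f u * lap f u =
    2 * \sum_u d u * f u ^+ 2 - \sum_u f u * (d u * f u + adj f u).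
  by rewrite mulr_sumr -sumrB; apply: eq_bigr => u _; rewrite /lap; ring.
by rewrite lerBlDr lerDl sum_mul_deg_adj_ge0.
Qed.

Lemma adjZ c f u : adj (fun v => c * f v) u = c * adj f u.
Proof. by rewrite /adj mulr_sumr; apply: eq_bigr => v _; rewrite mulrCA. Qed.

Lemma adjB f g u : adj (fun v => f v - g v) u = adj f u - adj g u.
Proof. by rewrite /adj -sumrB; apply: eq_bigr => v _; rewrite mulrBr. Qed.

Lemma adj_norm_le f K u : (forall v, `|f v| <= K) -> `|adj f u| <= d u * K.
Proof.
move=> fK; rewrite deg_sum mulr_suml; apply: le_trans (ler_norm_sum _ _ _) _.
by apply: ler_sum => v _; rewrite normrM normr_nat ler_wpM2l.
Qed.

Lemma weak_duality (q c m x : 'I_n -> R) :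
  (forall u, 0 <= m u) -> (forall u, m u * q u + adj m u = 1) ->
  (forall u, c u <= x u * q u + adj x u) ->
  \sum_u m u * c u <= \sum_u x u.
Proof.
move=> m_ge0 m_eq x_ge.
have -> : \sum_u x u = \sum_u m u * (x u * q u + adj x u).
  transitivity (\sum_u (m u * (x u * q u) + x u * adj m u)).
    by apply: eq_bigr => u _; rewrite -[LHS]mulr1 -(m_eq u); ring.
  rewrite big_split /= sum_mul_adjC -big_split /=.
  by apply: eq_bigr => u _; ring.
by apply: ler_sum => u _; rewrite ler_wpM2l.
Qed.

End EdgeSums.

(* [H / P] lies in [1, 2], phrased without dividing by [P]. *)
Definition within_1_2 (R : realFieldType) (P H : R) := P ^+ 2 <= P * H /\ H ^+ 2 <= 2 * (P * H).

Lemma within_1_2_mul_le (R : realFieldType) (P H a : R) :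
  within_1_2 P H -> a * H <= P * H + a * P + 3 / 2 * a ^+ 2.
Proof.
case=> PH HP; have := sqr_ge0 (3 / 2 * a - H); have := sqr_ge0 (3 / 2 * a + P).
nra.
Qed.

Lemma within_1_2_of_le (R : realFieldType) (P H : R) :
  0 <= P -> P <= H -> H <= 2 * P -> within_1_2 P H.
Proof. by move=> P_ge0 PH HP; split; nra. Qed.

Lemma within_1_2N (R : realFieldType) (P H : R) : within_1_2 P H -> within_1_2 (- P) (- H).
Proof. by rewrite /within_1_2 !sqrrN mulrNN. Qed.

Lemma within_1_2_div_succ (R : realFieldType) (t1 t2 s1 s2 : R) :
  0 < t1 <= t2 -> t2 <= 1 / 4 -> 0 < s2 ->
  s1 * (1 - (t2 - t1)) <= s2 -> s2 * (1 + (t2 - t1)) <= s1 ->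
  within_1_2 (s1 - s2) (s1 / (1 + t1) - s2 / (1 + t2)).
Proof.
move=> /andP[t1_gt0 t12] t2_le s2_gt0 s2_ge s1_ge.
have s1_gt0 : 0 < s1 by nra.
have den_gt0 : 0 < (1 + t1) * (1 + t2) by nra.
have HP : s1 / (1 + t1) - s2 / (1 + t2) - (s1 - s2) =
    (s2 * t2 * (1 + t1) - s1 * t1 * (1 + t2)) / ((1 + t1) * (1 + t2)).
  by field; rewrite !gt_eqF //; lra.
have PH : 2 * (s1 - s2) - (s1 / (1 + t1) - s2 / (1 + t2)) =
    (s1 * (1 + 2 * t1) * (1 + t2) - s2 * (1 + 2 * t2) * (1 + t1)) / ((1 + t1) * (1 + t2)).
  by field; rewrite !gt_eqF //; lra.
apply: within_1_2_of_le; first nra.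
- rewrite -subr_ge0 HP; apply: divr_ge0; last exact: ltW.
  have : 0 <= (s2 - s1 * (1 - (t2 - t1))) * (t2 * (1 + t1)) by apply: mulr_ge0; nra.
  have : 0 <= s1 * (t2 - t1) * (1 - t2 - t1 * t2) by apply: mulr_ge0; nra.
  nra.
- rewrite -subr_ge0 PH; apply: divr_ge0; last exact: ltW.
  have : 0 <= (s1 - s2 * (1 + (t2 - t1))) * ((1 + 2 * t1) * (1 + t2)) by apply: mulr_ge0; nra.
  have : 0 <= s2 * (t2 - t1) * ((1 + 2 * t1) * (1 + t2) - 1) by apply: mulr_ge0; nra.
  nra.
Qed.

Lemma within_1_2_expR (R : realType) (a t1 t2 : R) : 0 < a -> 0 < t1 <= 1 / 4 -> 0 < t2 <= 1 / 4 ->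
  within_1_2 (a * expR (- t1) - a * expR (- t2))
             (a * expR (- t1) / (1 + t1) - a * expR (- t2) / (1 + t2)).
Proof.
wlog t12 : t1 t2 / t1 <= t2 => [wlog_t12 a_gt0 t1_in t2_in | a_gt0 /andP[t1_gt0 _] /andP[_ t2_le]].
  have [t12|t21] := leP t1 t2; first exact: wlog_t12.
  have := within_1_2N (wlog_t12 _ _ (ltW t21) a_gt0 t2_in t1_in).
  by rewrite !opprB.
have expR_t1 : expR (- t1) = expR (- t2) * expR (t2 - t1) by rewrite -expRD; congr expR; ring.
have expR_t2 : expR (- t2) = expR (- t1) * expR (- (t2 - t1)) by rewrite -expRD; congr expR; ring.
have ae_ge0 t : 0 <= a * expR t by rewrite mulr_ge0 ?expR_ge0 // ltW.
apply: within_1_2_div_succ; rewrite ?t1_gt0 ?mulr_gt0 ?expR_gt0 //.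
- by rewrite expR_t2 mulrA ler_wpM2l // expR_ge1Dx.
- by rewrite expR_t1 mulrA ler_wpM2l // expR_ge1Dx.
Qed.

Section DualSolution.
Variables (R : realFieldType) (n : nat) (e : rel 'I_n) (p : 'I_n -> R) (D : R).
Hypotheses (e_sym : forall u v, e u v = e v u) (p_gt0 : forall u, 0 < p u) (D_gt0 : 0 < D).
Hypotheses (deg_le : forall u, (deg e u)%:R <= D)
  (p_margin : forall u, (deg e u)%:R + 3 * D <= (p u)^-1).

Local Notation d u := ((deg e u)%:R : R).
Local Notation adj := (adj e).
Local Notation esum := (esum e).

Lemma quad_form_ge f : 3 * D * \sum_u f u ^+ 2 <= \sum_u f u * (f u / p u + adj f u).
Proof.
have -> : \sum_u f u * (f u / p u + adj f u) =
    \sum_u (f u ^+ 2 / p u - (d u + 3 * D) * f u ^+ 2) + 3 * D * \sum_u f u ^+ 2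
    + \sum_u f u * (d u * f u + adj f u).
  by rewrite mulr_sumr -!big_split /=; apply: eq_bigr => u _; ring.
have := sum_mul_deg_adj_ge0 e_sym f.
have : 0 <= \sum_u (f u ^+ 2 / p u - (d u + 3 * D) * f u ^+ 2).
  by apply: sumr_ge0 => u _; rewrite subr_ge0 mulrC ler_wpM2l ?sqr_ge0.
lra.
Qed.

Lemma dual_system_solvable : exists m : 'I_n -> R, forall u, m u / p u + adj m u = 1.
Proof.
pose M : 'M[R]_n := \matrix_(i, j) ((i == j)%:R / p i + (e i j)%:R).
have M_row (v : 'rV[R]_n) j : (v *m M) 0 j = v 0 j / p j + adj (fun i => v 0 i) j.
  rewrite !mxE (eq_bigr (fun i => v 0 i * ((i == j)%:R / p i) + (e j i)%:R * v 0 i));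
    last by move=> i _; rewrite mxE e_sym; ring.
  rewrite big_split /=; congr (_ + _).
  rewrite (bigD1 j) //= eqxx mul1r big1 ?addr0 // => i /negbTE ->.
  by rewrite mul0r mulr0.
have M_unit : M \in unitmx.
  rewrite unitmxE unitfE; apply/negP => /det0P [v v_neq0 vM0].
  have : 3 * D * \sum_i v 0 i ^+ 2 <= 0.
    rewrite (le_trans (quad_form_ge _)) // big1 // => i _.
    by rewrite -M_row vM0 mxE mulr0.
  rewrite pmulr_rle0 ?mulr_gt0 // => sq_le0.
  have sum0 : \sum_i v 0 i ^+ 2 = 0.
    by apply/eqP; rewrite eq_le sq_le0 sumr_ge0 // => i _; apply: sqr_ge0.
  move/eqP: v_neq0; apply; apply/rowP => i; rewrite mxE; apply/eqP.
  by rewrite -sqrf_eq0; apply/eqP; apply: (psumr_eq0P _ sum0) => // k _; apply: sqr_ge0.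
exists (fun j => ((const_mx 1 : 'rV[R]_n) *m invmx M) 0 j) => u.
by rewrite -M_row mulmxKV // mxE.
Qed.

Lemma dual_solution_gt0 m : (forall u, m u / p u + adj m u = 1) -> forall u, 0 < m u.
Proof.
move=> m_eq u.
have m_fix v : m v = p v * (1 - adj m v).
  by rewrite -(m_eq v) addrK mulrC divfK ?gt_eqF.
have Dp_le v : D * p v <= 1 / 3.
  have h : 3 * D <= (p v)^-1 by have := p_margin v; have := ler0n R (deg e v); lra.
  by rewrite -(ler_pM2r (p_gt0 v)) mulVf ?gt_eqF // in h; lra.
have [w _ m_max] := @arg_maxP _ R _ u predT (fun v => `|m v|) isT.
set K := `|m w| in m_max.
have adj_le v : `|adj m v| <= D * K.
  apply: le_trans (adj_norm_le e v (fun v => m_max v isT)) _.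
  by rewrite ler_wpM2r ?normr_ge0.
have DK_le : D * K <= 1 / 2.
  have : K <= p w * (1 + D * K).
    rewrite {1}/K (m_fix w) normrM gtr0_norm //; apply: ler_wpM2l; first exact: ltW.
    by apply: le_trans (ler_normB _ _) _; rewrite normr1 lerD2l adj_le.
  have := Dp_le w; have := p_gt0 w; have : 0 <= K := normr_ge0 _.
  nra.
rewrite m_fix mulr_gt0 // subr_gt0; apply: le_lt_trans (ler_norm _) _.
by apply: le_lt_trans (adj_le u) _; lra.
Qed.

Variable h : 'I_n -> R.
Hypotheses (h_p : forall u, h u * (1 + d u * p u) = p u)
  (p_h_within : forall u v, within_1_2 (p u - p v) (h u - h v)).

Lemma dual_value_ge m : (forall u, m u / p u + adj m u = 1) ->
  \sum_u p u <= \sum_u m u * (1 + d u * p u).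
Proof.
move=> m_eq; pose nu u := m u - h u.
have h_div u : h u / p u = 1 - d u * h u.
  apply: (mulIf (lt0r_neq0 (p_gt0 u))); rewrite divfK ?gt_eqF // mulrBl mul1r.
  by rewrite -{1}(h_p u); ring.
have nu_eq u : nu u / p u + adj nu u = lap e h u.
  have -> : nu u / p u + adj nu u = m u / p u + adj m u - (h u / p u + adj h u).
    by rewrite adjB /nu; ring.
  by rewrite m_eq h_div /lap; ring.
have p_lap_h : \sum_u p u * lap e h u = \sum_u nu u + \sum_u nu u * adj p u.
  rewrite -sum_mul_adjC // -big_split; apply: eq_bigr => u _; rewrite -nu_eq mulrDr.
  by rewrite mulrC divfK ?gt_eqF.
have -> : \sum_u m u * (1 + d u * p u) =
    \sum_u p u + (\sum_u p u * lap e h u + \sum_u nu u * lap e p u).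
  rewrite p_lap_h -!big_split; apply: eq_bigr => u _ /=.
  by rewrite -[in RHS](h_p u) /nu /lap; ring.
rewrite lerDl.
have quad : 3 * D * \sum_u nu u ^+ 2 <= \sum_u nu u * lap e h u.
  rewrite [X in _ <= X](eq_bigr (fun u => nu u * (nu u / p u + adj nu u))).
    exact: quad_form_ge.
  by move=> u _; rewrite nu_eq.
have lap_le := sum_mul_lap_le e_sym nu.
have deg_sq : \sum_u d u * nu u ^+ 2 <= D * \sum_u nu u ^+ 2.
  by rewrite mulr_sumr; apply: ler_sum => u _; rewrite ler_wpM2r ?sqr_ge0.
have := @ler_esum _ _ e (fun u v => (nu u - nu v) * (h u - h v))
  (fun u v => (p u - p v) * (h u - h v) + (nu u - nu v) * (p u - p v)
              + 3 / 2 * (nu u - nu v) ^+ 2)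
  (fun u v => within_1_2_mul_le (nu u - nu v) (p_h_within u v)).
rewrite !esumD esumZ !esum_sub_mul //.
lra.
Qed.

Lemma sum_le_of_cover x : (forall u, 1 + d u * p u <= x u / p u + adj x u) ->
  \sum_u p u <= \sum_u x u.
Proof.
move=> x_cover; have [m m_eq] := dual_system_solvable.
apply: le_trans (dual_value_ge m_eq) _.
by apply: (weak_duality e_sym (q := fun u => (p u)^-1)) => // u; exact/ltW/dual_solution_gt0.
Qed.

End DualSolution.

Lemma LambertW_spec (R : realType) (x : R) :
  0 < x -> 0 < LambertW x /\ LambertW x * expR (LambertW x) = x.
Proof.
move=> x_gt0; apply: (@xgetPex _ 0 [set w | 0 < w /\ w * expR w = x]).
have cont : continuous (fun t : R => t * expR t).
  by move=> t; apply: cvgM; [exact: cvg_id | exact: continuous_expR].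
have [w] : exists2 w, w \in `[0, x] & w * expR w = x.
  apply: IVT; [exact: ltW | exact: continuous_subspaceT |].
  have x_le : x <= x * expR x by rewrite -{1}(mulr1 x) ler_pM2l // -expR0 ler_expR ltW.
  by rewrite mul0r ge_min le_max (ltW x_gt0) x_le orbT.
rewrite in_itv /= => /andP[w_ge0 _] wx; exists w; split=> //.
by rewrite lt_neqAle w_ge0 andbT; apply/eqP => w0; move: x_gt0; rewrite -wx -w0 mul0r ltxx.
Qed.

Definition Dscale (R : realType) (b lam : R) := (1 + lam) `^ b * ln (1 + lam).

Lemma Dscale_mul_le (R : realType) (b lam D : R) :
  b = 0 \/ 1 <= b -> 0 < lam -> 1 <= D -> lam < cconst b / D ->
  Dscale b lam * D <= 1 / 4.
Proof.
move=> b_cases lam_gt0 D_ge1; rewrite /Dscale ltr_pdivlMr ?(lt_le_trans ltr01) //.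
have ln_le : ln (1 + lam) <= lam by rewrite le_ln1Dx // (lt_trans _ lam_gt0) ?ltrN10.
have ln_ge0 : 0 <= ln (1 + lam) by rewrite ln_ge0 // lerDl ltW.
case: b_cases => [-> | b_ge1].
  by rewrite powRr0 mul1r /cconst eqxx => lamD; nra.
have b_gt0 : 0 < b by lra.
rewrite /cconst gt_eqF // => lamD.
have lamDb : lam * D * b < 896883%:R / 10000000%:R.
  have -> : 896883%:R / 10000000%:R = 896883%:R / (10000000%:R * b) * b :> R.
    by field; rewrite gt_eqF.
  by rewrite ltr_pM2r.
have blam_le : b * lam <= 9 / 100.
  have : 0 <= b * lam * (D - 1) by rewrite mulr_ge0 ?subr_ge0 // mulr_ge0 // ltW.
  lra.
have pow_le : (1 + lam) `^ b <= expR (b * lam).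
  by rewrite /powR gt_eqF ?ler_expR ?ler_wpM2l //; lra.
have exp_le : expR (b * lam) <= 11 / 10.
  have := expR_ge1Dx (- (b * lam)); rewrite expRN -[_^-1]mul1r ler_pdivlMr ?expR_gt0 //.
  have := expR_gt0 (b * lam); nra.
have D_ge0 : 0 <= D by lra.
rewrite -mulrA; apply: le_trans (ler_pM (powR_ge0 _ _) (mulr_ge0 ln_ge0 D_ge0)
  (le_trans pow_le exp_le) (ler_wpM2r D_ge0 ln_le)) _.
have : 0 <= lam * D * (b - 1) by rewrite mulr_ge0 ?subr_ge0 // mulr_ge0 // ltW.
lra.
Qed.

Definition Wv (R : realType) n (e : rel 'I_n) (b lam : R) u := LambertW (Dv e b lam u).

Definition pv (R : realType) n (e : rel 'I_n) (b lam : R) u := Wv e b lam u / (deg e u)%:R.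

Section LambertWeights.
Variables (R : realType) (n : nat) (e : rel 'I_n) (b lam : R).
Hypotheses (deg_gt0 : forall u, (0 < deg e u)%N) (lam_gt0 : 0 < lam).

Local Notation d u := ((deg e u)%:R : R).
Local Notation a := (Dscale b lam).
Local Notation W := (Wv e b lam).
Local Notation p := (pv e b lam).

Lemma natr_deg_gt0 u : 0 < d u. Proof. by rewrite ltr0n. Qed.

Lemma Dscale_gt0 : 0 < a.
Proof.
have lam1 : 1 < 1 + lam by rewrite ltrDl.
by rewrite mulr_gt0 ?powR_gt0 ?ln_gt0 // (lt_trans ltr01).
Qed.

Lemma Dv_E u : Dv e b lam u = d u * a.
Proof. by rewrite /Dv mulrA. Qed.

Lemma Wv_spec u : 0 < W u /\ W u * expR (W u) = d u * a.
Proof. by rewrite -Dv_E; apply: LambertW_spec; rewrite Dv_E mulr_gt0 ?natr_deg_gt0 ?Dscale_gt0. Qed.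

Lemma pv_gt0 u : 0 < p u.
Proof. by rewrite divr_gt0 ?natr_deg_gt0 //; case: (Wv_spec u). Qed.

Lemma deg_mul_pv u : d u * p u = W u.
Proof. by rewrite /pv mulrC divfK // lt0r_neq0 ?natr_deg_gt0. Qed.

Lemma pv_expR u : p u = a * expR (- W u).
Proof.
have [W_gt0 WE] := Wv_spec u.
have eW : expR (W u) = d u * a / W u by rewrite -WE mulrC mulKf ?lt0r_neq0.
by rewrite /pv expRN eW invf_div; field; rewrite !lt0r_neq0 ?natr_deg_gt0 ?Dscale_gt0.
Qed.

Lemma betav_add_gammav u :
  betav e b lam u + d u * gammav e b lam u = (1 + lam) / lam * a / p u.
Proof.
have [W_gt0 _] := Wv_spec u.
rewrite /betav /gammav /pv -/(W u) Dv_E.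
by field; rewrite !lt0r_neq0 ?natr_deg_gt0 ?Dscale_gt0 //; lra.
Qed.

Lemma betav_gammav_lincomb u y z :
  betav e b lam u * y + gammav e b lam u * z = (1 + lam) / lam * a * (y / p u + z) / (1 + W u).
Proof.
have [W_gt0 _] := Wv_spec u.
rewrite /betav /gammav /pv -/(W u) Dv_E.
by field; rewrite !lt0r_neq0 ?natr_deg_gt0 ?Dscale_gt0 //; lra.
Qed.

Variable D : R.
Hypotheses (deg_le : forall u, d u <= D) (Dscale_le : a * D <= 1 / 4).

Lemma Wv_le u : W u <= 1 / 4.
Proof.
have [W_gt0 WE] := Wv_spec u.
have eW_ge1 : 1 <= expR (W u) by rewrite -expR0 ler_expR ltW.
have : W u <= W u * expR (W u) by nra.
rewrite WE => /le_trans; apply; apply: le_trans Dscale_le.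
by rewrite mulrC ler_wpM2l ?deg_le // ltW ?Dscale_gt0.
Qed.

Lemma pv_margin u : d u + 3 * D <= (p u)^-1.
Proof.
have [W_gt0 _] := Wv_spec u.
have a_gt0 := Dscale_gt0.
have inv_a_ge : 4 * D <= a^-1.
  by rewrite -(ler_pM2l a_gt0) mulfV ?lt0r_neq0 //; have := Dscale_le; lra.
have inv_a_gt0 : 0 < a^-1 by rewrite invr_gt0.
have eW_ge1 : 1 <= expR (W u) by rewrite -expR0 ler_expR ltW.
rewrite pv_expR invfM expRN invrK; have := deg_le u; nra.
Qed.

Lemma pv_within u v : within_1_2 (p u - p v) (p u / (1 + W u) - p v / (1 + W v)).
Proof.
have [Wu_gt0 _] := Wv_spec u; have [Wv_gt0 _] := Wv_spec v.
by rewrite !pv_expR; apply: within_1_2_expR; rewrite ?Dscale_gt0 ?Wv_le ?Wu_gt0 ?Wv_gt0.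
Qed.

End LambertWeights.

Lemma diag_adjmx_mulmxE (R : realType) n (e : rel 'I_n) (beta gamma : 'I_n -> R)
    (x : 'cV[R]_n) i :
  ((diag_mx (\row_u beta u) + diag_mx (\row_u gamma u) *m adjmx e) *m x) i 0 =
  beta i * x i 0 + gamma i * adj e (fun v => x v 0) i.
Proof.
rewrite mulmxDl -mulmxA !mul_diag_mx !mxE; congr (_ + _).
by congr (_ * _); apply: eq_bigr => j _; rewrite mxE.
Qed.

Theorem mainTheorem8 (R : realType) (n : nat) (e : rel 'I_n)
  (Hg : simple_graph e) (Hiso : forall u, (0 < deg e u)%N)
  (b lam : R) (Hb : b = 0 \/ 1 <= b)
  (Hlam0 : 0 < lam) (Hlam1 : lam < cconst b / (maxdeg e)%:R)
  (x : 'cV[R]_n) (Hx0 : forall i, 0 <= x i 0)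
  (Hx1 : forall i,
     1 <= ((diag_mx (\row_u betav e b lam u)
            + diag_mx (\row_u gammav e b lam u) *m adjmx e) *m x) i 0) :
  \sum_(u < n) 1 / (betav e b lam u + (deg e u)%:R * gammav e b lam u)
    <= \sum_(u < n) x u 0.
Proof.
have e_sym : forall u v, e u v = e v u by case: Hg.
set D : R := (maxdeg e)%:R.
have deg_le u : (deg e u)%:R <= D by rewrite ler_nat; exact: leq_bigmax.
have D_ge1 : 1 <= D.
  rewrite ler1n lt0n; apply: contraTneq Hlam1 => ->.
  by rewrite invr0 mulr0 -leNgt ltW.
have Dscale_le := Dscale_mul_le Hb Hlam0 D_ge1 Hlam1.
set K := (1 + lam) / lam * Dscale b lam.
have K_gt0 : 0 < K by rewrite mulr_gt0 ?divr_gt0 ?Dscale_gt0 //; lra.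
have cover : \sum_u pv e b lam u <= \sum_u K * x u 0.
  apply: (sum_le_of_cover e_sym (pv_gt0 b Hiso Hlam0) (lt_le_trans ltr01 D_ge1) deg_le
           (pv_margin Hiso Hlam0 deg_le Dscale_le) _ (pv_within Hiso Hlam0 deg_le Dscale_le)
           (x := fun u => K * x u 0)) => u; have [W_gt0 _] := Wv_spec b Hiso Hlam0 u.
  - by rewrite deg_mul_pv // divfK // lt0r_neq0 //; lra.
  - have := Hx1 u; rewrite diag_adjmx_mulmxE betav_gammav_lincomb // -/K ler_pdivlMr; last lra.
    by rewrite deg_mul_pv // adjZ; lra.
rewrite (eq_bigr (fun u => pv e b lam u / K)) => [|u _]; last first.
  by rewrite betav_add_gammav // -/K div1r invf_div.
by rewrite -mulr_suml ler_pdivrMr // mulrC mulr_sumr.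
Qed.
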